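(* Let $T$ be a linear operator in $H$ with $W(T)=\mathbb C$. (i) Let $x,y\in\operatorname{dom}(T)$, $\|x\|=\|y\|=1$, be linearly independent. Then, for all but at most three $t\in\mathbb C$, \[ W\big(T|_{(y+tx)^\perp\cap\operatorname{dom}(T)}\big)=\mathbb C. \] (ii) Let $y\in\operatorname{dom}(T)$, $\|y\|=1$, be such that $\{y\}^\perp\cap\operatorname{dom}(T)\neq\{0\}$. Then for every $\varepsilon>0$ there exists $w_\varepsilon\in\operatorname{dom}(T)$ with $\|w_\varepsilon\|=1$, \[ W\big(T|_{\{w_\varepsilon\}^\perp\cap\operatorname{dom}(T)}\big)=\mathbb C\quad\text{and}\quad|\langle Tw_\varepsilon,w_\varepsilon\rangle-\langle Ty,y\rangle|<\varepsilon. \]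
   Context: $H$ is a separable infinite-dimensional complex Hilbert space; $T$ need not be closed, closable or densely defined. $W(T)=\{\langle Tx,x\rangle:x\in\operatorname{dom}(T),\|x\|=1\}$; for a subspace $M\subset\operatorname{dom}(T)$, $T|_M$ is the restriction of $T$ to $M$, so $W(T|_M)=\{\langle Tx,x\rangle:x\in M,\|x\|=1\}$. *)

From HB Require Import structures.
From mathcomp Require Import all_boot all_order all_algebra.
From mathcomp Require Import complex.
From mathcomp Require Import reals.
Set Implicit Arguments. Unset Strict Implicit. Unset Printing Implicit Defensive.
Import Order.TTheory GRing.Theory Num.Theory.
Local Open Scope ring_scope.

Record Hilbert (R : realType) (H : lmodType R[i]) := {
  ip : H -> H -> R[i];
  ip_linl : forall (a : R[i]) (x y z : H), ip (a *: x + y) z = a * ip x z + ip y z;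
  ip_conj : forall x y : H, ip y x = (ip x y)^*;
  ip_ge0 : forall x : H, 0 <= ip x x;
  ip_def : forall x : H, ip x x = 0 -> x = 0;
  ip_complete : forall u : nat -> H,
    (forall e : R, 0 < e -> exists N : nat, forall m n : nat, (N <= m)%N -> (N <= n)%N ->
        ip (u m - u n) (u m - u n) < (e%:C)%C) ->
    exists l : H, forall e : R, 0 < e -> exists N : nat, forall n : nat, (N <= n)%N ->
        ip (u n - l) (u n - l) < (e%:C)%C;
  ip_separable : exists d : nat -> H, forall (x : H) (e : R), 0 < e ->
    exists n : nat, ip (x - d n) (x - d n) < (e%:C)%C;
  ip_infdim : forall (n : nat) (v : 'I_n -> H), exists x : H,
    forall c : 'I_n -> R[i], x <> \sum_(i < n) c i *: v i
}.

(* A linear operator in H: a (not necessarily closed or dense) linear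
   subspace dom of H and a map T that is linear on dom (values of T outside
   dom are irrelevant). *)
Record LinOp (R : realType) (H : lmodType R[i]) := {
  dom : H -> Prop;
  op : H -> H;
  dom0 : dom 0;
  domD : forall x y, dom x -> dom y -> dom (x + y);
  domZ : forall (a : R[i]) x, dom x -> dom (a *: x);
  op_lin : forall (a : R[i]) x y, dom x -> dom y -> op (a *: x + y) = a *: op x + op y
}.

Definition numrange (R : realType) (H : lmodType R[i]) (HS : Hilbert H)
  (T : LinOp H) (M : H -> Prop) : R[i] -> Prop :=
  fun z => exists x : H, M x /\ ip HS x x = 1 /\ ip HS (op T x) x = z.

Definition numrange_full (R : realType) (H : lmodType R[i]) (HS : Hilbert H)
  (T : LinOp H) (M : H -> Prop) : Prop :=
  forall z : R[i], numrange HS T M z.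

Definition perp_dom (R : realType) (H : lmodType R[i]) (HS : Hilbert H)
  (T : LinOp H) (v : H) : H -> Prop :=
  fun z => dom T z /\ ip HS z v = 0.

(* When W(T|_M) <> C for a subspace M of dom(T), convexity of W(T|_M)
   (Toeplitz-Hausdorff) puts it in a half-plane: Re (om <Tu,u>) <= c ||u||^2 on M
   for some om <> 0.  If this happens on v1^perp and on v2^perp for independent
   v1, v2, write u in dom(T) as n + a p1 + b p2 with n in v1^perp /\ v2^perp and
   p1, p2 a dual pair, and compare (om1 + om2) <Tu,u> with om1 <Tm1,m1> +
   om2 <Tm2,m2> for suitable m1 in v1^perp, m2 in v2^perp: the terms <Tn,n> and
   <Tn,p_i>, which ||u|| does not control, cancel.  So W(T) lies in a half-plane
   with normal om1 + om2, and W(T) = C forces om1 + om2 = 0.  Three exceptional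
   values of t would give three nonzero om's with pairwise vanishing sums; hence
   (i), even with at most two exceptions.  For (ii), normalise y + r x, where x
   is a unit vector orthogonal to y and r > 0 is small and not exceptional. *)

From HB Require Import structures.
From mathcomp Require Import all_boot all_order all_algebra.
From mathcomp Require Import complex reals.
From mathcomp Require Import ring lra.
From Stdlib Require Import Classical.
From mathcomp Require Import classical_sets.
Import Order.TTheory GRing.Theory Num.Theory.
Local Open Scope ring_scope.
Set Implicit Arguments. Unset Strict Implicit. Unset Printing Implicit Defensive.

Local Notation Re := complex.Re.
Local Notation Im := complex.Im.
Import ComplexField.Normc.

Section ComplexScalars.
Variable R : rcfType.
Implicit Types (x y : R[i]) (r : R).

Lemma complex_ext x y : Re x = Re y -> Im x = Im y -> x = y.
Proof. by case: x y => [a b] [c d] /= -> ->. Qed.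

Lemma Re_add x y : Re (x + y) = Re x + Re y. Proof. exact: raddfD. Qed.
Lemma Im_add x y : Im (x + y) = Im x + Im y. Proof. exact: raddfD. Qed.
Lemma Re_sub x y : Re (x - y) = Re x - Re y. Proof. exact: raddfB. Qed.
Lemma Im_sub x y : Im (x - y) = Im x - Im y. Proof. exact: raddfB. Qed.

Lemma Re_mul x y : Re (x * y) = Re x * Re y - Im x * Im y.
Proof. by case: x; case: y. Qed.

Lemma Im_mul x y : Im (x * y) = Re x * Im y + Im x * Re y.
Proof. by case: x; case: y. Qed.

Lemma Re_conjc x : Re x^* = Re x. Proof. by case: x. Qed.
Lemma Im_conjc x : Im x^* = - Im x. Proof. by case: x. Qed.

Lemma Re_scalec r x : Re (r%:C%C * x) = r * Re x.
Proof. by rewrite Re_mul /= mul0r subr0. Qed.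

Lemma Im_scalec r x : Im (r%:C%C * x) = r * Im x.
Proof. by rewrite Im_mul /= mul0r addr0. Qed.

Lemma conjc_real r : (r%:C%C)^* = r%:C%C.
Proof. by apply: complex_ext; rewrite ?Im_conjc /= ?oppr0. Qed.

Definition cnorm2 x := Re x ^+ 2 + Im x ^+ 2.

Lemma cnorm2_ge0 x : 0 <= cnorm2 x.
Proof. by rewrite addr_ge0 ?sqr_ge0. Qed.

Lemma cnorm2_eq0 x : (cnorm2 x == 0) = (x == 0).
Proof.
apply/idP/eqP => [|->]; last by rewrite /cnorm2 expr0n addr0.
rewrite paddr_eq0 ?sqr_ge0 // !sqrf_eq0 => /andP[/eqP re /eqP im].
by apply: complex_ext.
Qed.

Lemma cnorm2_gt0 x : x != 0 -> 0 < cnorm2 x.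
Proof. by move=> x0; rewrite lt_def cnorm2_eq0 x0 cnorm2_ge0. Qed.

Lemma cnorm2M x y : cnorm2 (x * y) = cnorm2 x * cnorm2 y.
Proof. by rewrite /cnorm2 Re_mul Im_mul; ring. Qed.

Lemma cnorm2_conjc x : cnorm2 x^* = cnorm2 x.
Proof. by rewrite /cnorm2 Re_conjc Im_conjc sqrrN. Qed.

Lemma cnorm2_real r : cnorm2 r%:C%C = r ^+ 2.
Proof. by rewrite /cnorm2 /= expr0n addr0. Qed.

Lemma mulc_conjc x : x * x^* = (cnorm2 x)%:C%C.
Proof. by apply: complex_ext; rewrite ?Re_mul ?Im_mul Re_conjc Im_conjc /cnorm2 /=; ring. Qed.

Lemma Re_mul_le x y : 2 * Re (x * y) <= cnorm2 x + cnorm2 y.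
Proof.
rewrite Re_mul /cnorm2.
have := sqr_ge0 (Re x - Re y); have := sqr_ge0 (Im x + Im y).
rewrite !expr2; lra.
Qed.

Lemma normc_real r : normc r%:C%C = `|r|.
Proof. by rewrite /= expr0n addr0 sqrtr_sqr. Qed.

Lemma normc_ge0 x : 0 <= normc x.
Proof. by case: x => *; exact: sqrtr_ge0. Qed.

End ComplexScalars.

Lemma exceptions_le2 (T : eqType) (P : T -> Prop) :
  (forall t1 t2 t3, P t1 -> P t2 -> P t3 -> t1 != t2 -> t1 != t3 -> t2 != t3 -> False) ->
  exists s : seq T, (size s <= 2)%N /\ forall t, t \notin s -> ~ P t.
Proof.
move=> no3.
have [[t1 P1]|none] := classic (exists t, P t); last first.
  by exists [::]; split=> // t _ Pt; apply: none; exists t.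
have [[t2 [P2 t21]]|one] := classic (exists t, P t /\ t != t1); last first.
  exists [:: t1]; split=> // t; rewrite inE => tt1 Pt; exact: one (ex_intro _ t (conj Pt tt1)).
exists [:: t1; t2]; split=> // t; rewrite !inE negb_or => /andP[tt1 tt2] Pt.
by apply: (no3 t1 t2 t) => //; rewrite eq_sym.
Qed.

Lemma exists_pos_real_notin (R : rcfType) (s : seq R[i]) (de : R) : 0 < de ->
  exists r : R, 0 < r <= de /\ r%:C%C \notin s.
Proof.
move=> de_gt0; pose f (k : nat) := (de / k.+1%:R)%:C%C.
have f_inj : injective f.
  move=> k l /(@complexI R) /(mulfI (lt0r_neq0 de_gt0)) /invr_inj /eqP.
  by rewrite eqr_nat eqSS => /eqP.
pose L := map f (iota 0 (size s).+1).
have /allPn [_ /mapP [k _ ->] fk_notin] : ~~ all (mem s) L.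
  apply/negP => /allP L_sub.
  have L_uniq : uniq L by rewrite map_inj_uniq ?iota_uniq.
  have := uniq_leq_size L_uniq L_sub.
  by rewrite size_map size_iota ltnn.
exists (de / k.+1%:R); split=> //.
by rewrite divr_gt0 ?ltr0Sn //= ler_pdivrMr ?ltr0Sn // ler_peMr ?(ltW de_gt0) // ler1n.
Qed.

Lemma real_quadratic_root (R : rcfType) (a b c : R) :
  0 < a -> 0 <= c -> exists x : R, a * x ^+ 2 + b * x = c.
Proof.
move=> a0 c0; have D0 : 0 <= b ^+ 2 + 4 * a * c.
  by rewrite addr_ge0 ?sqr_ge0 // !mulr_ge0 // ltW.
exists ((- b + Num.sqrt (b ^+ 2 + 4 * a * c)) / (2 * a)).
apply/eqP; rewrite -subr_eq0; apply/eqP.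
rewrite [X in X - _](_ : _ = (Num.sqrt (b ^+ 2 + 4 * a * c) ^+ 2 - b ^+ 2) / (4 * a)).
  by rewrite sqr_sqrtr //; field; rewrite gt_eqF.
by field; rewrite gt_eqF.
Qed.

Lemma exists_phase_real (R : rcfType) (A B : R[i]) :
  exists2 e : R[i], e != 0 & Im (e^* * A + e * B) = 0.
Proof.
have [AB|AB] := eqVneq A B^*.
  by exists 1; rewrite ?oner_neq0 // rmorph1 !mul1r AB Im_add Im_conjc addNr.
exists (A - B^*); rewrite ?subr_eq0 //.
have -> : (A - B^*)^* * A + (A - B^*) * B = A * A^* - B * B^*.
  by rewrite rmorphB /= conjCK; ring.
by rewrite !mulc_conjc Im_sub /= subr0.
Qed.

Definition convexC (R : realType) (K : R[i] -> Prop) :=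
  forall (k1 k2 : R[i]) (l : R), K k1 -> K k2 -> 0 <= l <= 1 ->
    K (l%:C%C * k1 + (1 - l)%:C%C * k2).

Section ConvexPlane.
Variables (R : realType) (K : R[i] -> Prop).
Hypothesis convK : convexC K.
Implicit Types k : R[i].

Lemma convexC_real_gt0 (p : R) : ~ K 0 -> 0 < p -> K p%:C%C ->
  forall k, K k -> Im k = 0 -> 0 < Re k.
Proof.
move=> K0 p0 Kp k Kk k_real; rewrite ltNge; apply/negP => k_le0; apply: K0.
have pk : 0 < p - Re k by lra.
have l01 : 0 <= p / (p - Re k) <= 1.
  by rewrite divr_ge0 ?(ltW p0) ?(ltW pk) //= ler_pdivrMr // mul1r; lra.
suff <- : (p / (p - Re k))%:C%C * k + (1 - p / (p - Re k))%:C%C * p%:C%C = 0.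
  exact: convK.
apply: complex_ext; rewrite ?Re_add ?Im_add ?Re_scalec ?Im_scalec ?k_real /=.
  by field; rewrite gt_eqF.
by rewrite !mulr0 addr0.
Qed.

Hypothesis K_real_gt0 : forall k, K k -> Im k = 0 -> 0 < Re k.

Lemma convexC_cross k1 k2 : K k1 -> K k2 -> 0 < Im k1 -> Im k2 < 0 ->
  0 < Re k1 * - Im k2 + Re k2 * Im k1.
Proof.
move=> K1 K2 im1 im2; have d0 : 0 < Im k1 - Im k2 by lra.
set l := - Im k2 / (Im k1 - Im k2).
have l01 : 0 <= l <= 1.
  by rewrite divr_ge0 ?(ltW d0) //= ?oppr_ge0 ?(ltW im2) //= ler_pdivrMr // mul1r; lra.
have := K_real_gt0 (convK K1 K2 l01).
rewrite Re_add Im_add !Re_scalec !Im_scalec.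
have -> : l * Im k1 + (1 - l) * Im k2 = 0 by rewrite /l; field; rewrite gt_eqF.
have -> : l * Re k1 + (1 - l) * Re k2 = (Re k1 * - Im k2 + Re k2 * Im k1) / (Im k1 - Im k2).
  by rewrite /l; field; rewrite gt_eqF.
by move=> /(_ erefl); rewrite pmulr_lgt0 ?invr_gt0.
Qed.

(* Normal -1 + i mu, with mu the supremum of the slopes -Re k / Im k over the upper
   half of K; by convexC_cross they lie below those over the lower half. *)
Lemma convexC_halfplane_real :
  exists2 w : R[i], w != 0 & forall k, K k -> Re (w * k) <= 0.
Proof.
have [[k2 [K2 im2]]|no_lower] := classic (exists k, K k /\ Im k < 0); last first.
  exists 'i%C; first by apply/eqP => /(congr1 (@complex.Im R)) /= /eqP; rewrite oner_eq0.
  move=> k Kk; rewrite Re_mul /= mul0r sub0r mul1r oppr_le0 leNgt.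
  by apply/negP => im_neg; apply: no_lower; exists k.
have [[k1 [K1 im1]]|no_upper] := classic (exists k, K k /\ 0 < Im k); last first.
  exists (- 'i)%C.
    by apply/eqP => /(congr1 (@complex.Im R)) /= /eqP; rewrite oppr_eq0 oner_eq0.
  move=> k Kk; rewrite Re_mul /= oppr0 mul0r sub0r mulN1r opprK leNgt.
  by apply/negP => im_pos; apply: no_upper; exists k.
pose slopes : set R := fun s => exists2 k, K k /\ 0 < Im k & s = - Re k / Im k.
have slopes_ub k : K k -> Im k < 0 -> ubound slopes (Re k / - Im k).
  move=> Kk imk _ [k' [Kk' imk'] ->]; rewrite -subr_ge0.
  have -> : Re k / - Im k - - Re k' / Im k' =
      (Re k' * - Im k + Re k * Im k') / (Im k' * - Im k).
    by field; rewrite ltr0_neq0 ?lt0r_neq0.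
  by rewrite divr_ge0 ?ltW ?convexC_cross // mulr_gt0 // oppr_gt0.
have slopes_n0 : exists s, slopes s by exists (- Re k1 / Im k1); exists k1.
have slopes_sup : has_sup slopes by split => //; exists (Re k2 / - Im k2); apply: slopes_ub.
exists (-1 +i* sup slopes)%C.
  by apply/eqP => /(congr1 (@complex.Re R)) /= /eqP; rewrite oppr_eq0 oner_eq0.
move=> k Kk; rewrite Re_mul /=.
have [imk|imk|imk] := ltgtP (Im k) 0.
- have := ge_sup slopes_n0 (slopes_ub _ Kk imk).
  rewrite ler_pdivlMr ?oppr_gt0 //; lra.
- have : - Re k / Im k <= sup slopes by apply: sup_upper_bound => //; exists k.
  rewrite ler_pdivrMr //; lra.
- by have := K_real_gt0 Kk imk; rewrite imk mulr0; lra.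
Qed.

End ConvexPlane.

Lemma convexC_halfplane (R : realType) (K : R[i] -> Prop) : convexC K -> ~ K 0 ->
  exists2 w : R[i], w != 0 & forall k, K k -> Re (w * k) <= 0.
Proof.
move=> convK K0.
have [[k0 Kk0]|K_empty] := classic (exists k, K k); last first.
  by exists 1 => [|k Kk]; [exact: oner_neq0 | case: K_empty; exists k].
have k0_neq0 : k0 != 0 by apply: contraPneq K0 => <-.
have k0J_neq0 : k0^* != 0 by rewrite conjC_eq0.
pose K' k := K (k / k0^*).
have convK' : convexC K'.
  by move=> k1 k2 l K1 K2 l01; rewrite /K' mulrDl -!mulrA; exact: convK.
have K'0 : ~ K' 0 by rewrite /K' mul0r.
have K'p : K' (cnorm2 k0)%:C%C by rewrite /K' -mulc_conjc mulfK.
have [w w_neq0 hw] := convexC_halfplane_real convK'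
  (convexC_real_gt0 convK' K'0 (cnorm2_gt0 k0_neq0) K'p).
exists (w * k0^*) => [|k Kk]; first by rewrite mulf_neq0.
by rewrite -mulrA [k0^* * k]mulrC; apply: hw; rewrite /K' mulfK.
Qed.

Section SesquilinearForms.
Variables (R : realType) (H : lmodType R[i]).
Implicit Types (M : H -> Prop) (S : H -> H -> R[i]) (u v w : H) (a : R[i]).

Record subspace M : Prop := Subspace {
  sub0 : M 0;
  subD : forall u v, M u -> M v -> M (u + v);
  subZ : forall a u, M u -> M (a *: u) }.

Record sesquilinear_on M S : Prop := SesquilinearOn {
  sesqDl : forall u v w, M u -> M v -> M w -> S (u + v) w = S u w + S v w;
  sesqZl : forall a u w, M u -> M w -> S (a *: u) w = a * S u w;
  sesqDr : forall u v w, M u -> M v -> M w -> S u (v + w) = S u v + S u w;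
  sesqZr : forall a u v, M u -> M v -> S u (a *: v) = a^* * S u v }.

Lemma subspaceT : subspace (fun _ => True).
Proof. by []. Qed.

Lemma form_expand M S a u v : subspace M -> sesquilinear_on M S -> M u -> M v ->
  S (a *: u + v) (a *: u + v) = a * a^* * S u u + a * S u v + a^* * S v u + S v v.
Proof.
move=> [_ MD MZ] [SDl SZl SDr SZr] Mu Mv.
have Mau := MZ a _ Mu; have Mw := MD _ _ Mau Mv.
by rewrite SDl ?SDr ?SZl ?SZr //; ring.
Qed.

End SesquilinearForms.

Section InnerProduct.
Variables (R : realType) (H : lmodType R[i]) (HS : Hilbert H).
Local Notation ip := (ip HS).
Implicit Types (u v w : H) (a : R[i]).

Lemma ipDl u v w : ip (u + v) w = ip u w + ip v w.
Proof. by have := ip_linl HS 1 u v w; rewrite scale1r mul1r. Qed.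

Lemma ip0l w : ip 0 w = 0.
Proof. by apply: (@addrI _ (ip 0 w)); rewrite -ipDl !addr0. Qed.

Lemma ipZl a u w : ip (a *: u) w = a * ip u w.
Proof. by have := ip_linl HS a u 0 w; rewrite !addr0 ip0l addr0. Qed.

Lemma ipBl u v w : ip (u - v) w = ip u w - ip v w.
Proof. by rewrite ipDl -scaleN1r ipZl mulN1r. Qed.

Lemma ipDr u v w : ip w (u + v) = ip w u + ip w v.
Proof. by rewrite (ip_conj HS (u + v)) ipDl rmorphD /= -!(ip_conj HS). Qed.

Lemma ipZr a u w : ip w (a *: u) = a^* * ip w u.
Proof. by rewrite (ip_conj HS (a *: u)) ipZl rmorphM /= -(ip_conj HS). Qed.

Lemma ipBr u v w : ip w (u - v) = ip w u - ip w v.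
Proof. by rewrite ipDr -scaleN1r ipZr rmorphN1 mulN1r. Qed.

Lemma ip_sesquilinear : sesquilinear_on (fun _ => True) ip.
Proof. by split=> *; rewrite ?ipDl ?ipZl ?ipDr ?ipZr. Qed.

Lemma ip_expand a u v :
  ip (a *: u + v) (a *: u + v) = a * a^* * ip u u + a * ip u v + a^* * ip v u + ip v v.
Proof. exact: form_expand _ (subspaceT H) ip_sesquilinear I I. Qed.

Definition norm2 u := Re (ip u u).

Lemma ip_norm2 u : ip u u = (norm2 u)%:C%C.
Proof. by have := ip_ge0 HS u; rewrite lecE => /andP[/eqP im _]; apply: complex_ext. Qed.

Lemma norm2_ge0 u : 0 <= norm2 u.
Proof. by have := ip_ge0 HS u; rewrite lecE => /andP[]. Qed.

Lemma norm2_eq0 u : (norm2 u == 0) = (u == 0).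
Proof.
apply/eqP/eqP => [n0|->]; last by rewrite /norm2 ip0l.
by apply: (@ip_def _ _ HS); rewrite ip_norm2 n0.
Qed.

Lemma norm2_gt0 u : u != 0 -> 0 < norm2 u.
Proof. by move=> u0; rewrite lt_def norm2_eq0 u0 norm2_ge0. Qed.

Lemma ip_self_eq0 u : (ip u u == 0) = (u == 0).
Proof. by rewrite ip_norm2 (inj_eq (@complexI R)) norm2_eq0. Qed.

Lemma norm2Z a u : norm2 (a *: u) = cnorm2 a * norm2 u.
Proof. by rewrite /norm2 ipZl ipZr mulrA mulc_conjc ip_norm2 Re_scalec. Qed.

Lemma norm2N u : norm2 (- u) = norm2 u.
Proof. by rewrite -scaleN1r norm2Z /cnorm2 /= sqrrN expr1n oppr0 expr0n addr0 mul1r. Qed.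

Lemma Re_mul_ip_le a v w : 2 * Re (a * ip v w) <= cnorm2 a * norm2 v + norm2 w.
Proof.
have := norm2_ge0 (a *: v - w).
rewrite /norm2 ipBl !ipBr !ipZl !ipZr (ip_conj HS w v) [ip v v]ip_norm2 [ip w w]ip_norm2.
rewrite /cnorm2 !Re_sub !Re_mul !Im_mul !Re_conjc !Im_conjc /=; lra.
Qed.

Lemma norm2D_le u v : norm2 (u + v) <= 2 * norm2 u + 2 * norm2 v.
Proof.
have := Re_mul_ip_le 1 u v; rewrite mul1r /cnorm2 /= expr1n expr0n addr0 mul1r.
rewrite /norm2 ipDl !ipDr [ip v u]ip_conj !Re_add Re_conjc; lra.
Qed.

Lemma cauchy_schwarz u v : cnorm2 (ip u v) <= norm2 u * norm2 v.
Proof.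
have [->|u0] := eqVneq u 0; first by rewrite ip0l /norm2 ip0l /cnorm2 /= expr0n addr0 mul0r.
have nu := norm2_gt0 u0.
set n := norm2 u in nu *; set c := cnorm2 (ip u v).
have := Re_mul_ip_le (n^-1%:C%C * (ip u v)^*) u v.
rewrite -mulrA [_^* * _]mulrC mulc_conjc -rmorphM /= cnorm2M cnorm2_real cnorm2_conjc -/n -/c.
have -> : n^-1 ^+ 2 * c * n = c / n by field; rewrite gt_eqF.
rewrite [_ * c]mulrC => h.
by rewrite -ler_pdivrMl // mulrC; lra.
Qed.

Lemma exists_unit_multiple u : u != 0 -> exists a, ip (a *: u) (a *: u) = 1.
Proof.
move=> u0; have nu := norm2_gt0 u0.
exists (Num.sqrt (norm2 u))^-1%:C%C.
rewrite ipZl ipZr conjc_real mulrA -rmorphM ip_norm2 -rmorphM -expr2 exprVn.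
by rewrite sqr_sqrtr ?ltW // mulVf ?gt_eqF.
Qed.

Definition biorth_residual v1 v2 p1 p2 u := u - ip u v1 *: p2 - ip u v2 *: p1.

Lemma biorth_residualE v1 v2 p1 p2 u :
  u = biorth_residual v1 v2 p1 p2 u + ip u v2 *: p1 + ip u v1 *: p2.
Proof. by rewrite /biorth_residual !subrK. Qed.

Lemma biorth_residual_orthl v1 v2 p1 p2 u : ip p1 v1 = 0 -> ip p2 v1 = 1 ->
  ip (biorth_residual v1 v2 p1 p2 u) v1 = 0.
Proof. by move=> p1v1 p2v1; rewrite !ipBl !ipZl p1v1 p2v1 mulr1 mulr0 subrr subr0. Qed.

Lemma biorth_residual_orthr v1 v2 p1 p2 u : ip p1 v2 = 1 -> ip p2 v2 = 0 ->
  ip (biorth_residual v1 v2 p1 p2 u) v2 = 0.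
Proof. by move=> p1v2 p2v2; rewrite !ipBl !ipZl p1v2 p2v2 mulr1 mulr0 subr0 subrr. Qed.

End InnerProduct.

Section FormNumRange.
Variables (R : realType) (H : lmodType R[i]) (HS : Hilbert H).
Local Notation ip := (ip HS).
Variable M : H -> Prop.
Hypothesis subM : subspace M.
Implicit Types (S : H -> H -> R[i]) (u v w : H) (z : R[i]).

Definition form_numrange S z := exists u, [/\ M u, u != 0 & S u u = z * ip u u].

Lemma form_numrange01 S u1 u2 (l : R) : sesquilinear_on M S ->
  M u1 -> M u2 -> u1 != 0 -> u2 != 0 -> S u1 u1 = ip u1 u1 -> S u2 u2 = 0 ->
  0 <= l <= 1 -> form_numrange S l%:C%C.
Proof.
(* After a phase change v of u2, both S w w and ip w w are real quadratics in X
   along w = X u1 + v, and S w w = l * ip w w has a real root. *)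
move=> sesqS M1 M2 u1_neq0 u2_neq0 S11 S22 /andP[l_ge0 l_le1].
have [->|l_neq1] := eqVneq l 1; first by exists u1; rewrite mul1r.
have [e e_neq0 d_real] := exists_phase_real (S u1 u2) (S u2 u1).
pose v := e *: u2.
have Mv : M v := subZ subM e M2.
have v_neq0 : v != 0 by rewrite scaler_eq0 negb_or e_neq0.
have Svv : S v v = 0 by rewrite (sesqZl sesqS) ?(sesqZr sesqS) // S22 !mulr0.
set n1 := norm2 HS u1; set n2 := norm2 HS v.
pose d := Re (S u1 v + S v u1); pose E := 2 * Re (ip u1 v).
have Sd : S u1 v + S v u1 = d%:C%C.
  by apply: complex_ext; rewrite //= (sesqZr sesqS) ?(sesqZl sesqS).
have ipE : ip u1 v + ip v u1 = E%:C%C.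
  apply: complex_ext; rewrite /E (ip_conj HS u1 v) ?Re_add ?Im_add ?Re_conjc ?Im_conjc //=.
  - by lra.
  - by rewrite addrN.
clearbody d E.
have n1_gt0 : 0 < n1 := norm2_gt0 HS u1_neq0.
have a_gt0 : 0 < (1 - l) * n1 by rewrite mulr_gt0 // subr_gt0 lt_neqAle l_neq1.
have c_ge0 : 0 <= l * n2 by rewrite mulr_ge0 ?norm2_ge0.
have [X hX] := real_quadratic_root (d - l * E) a_gt0 c_ge0.
have Sw : S (X%:C%C *: u1 + v) (X%:C%C *: u1 + v) = (X ^+ 2 * n1 + X * d)%:C%C.
  rewrite (form_expand _ subM sesqS M1 Mv) Svv S11 conjc_real ip_norm2 -/n1.
  by rewrite !rmorphD !rmorphM /= -Sd; ring.
have ipw : ip (X%:C%C *: u1 + v) (X%:C%C *: u1 + v) = (X ^+ 2 * n1 + X * E + n2)%:C%C.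
  rewrite ip_expand conjc_real [ip u1 u1]ip_norm2 [ip v v]ip_norm2 -/n1 -/n2.
  by rewrite !rmorphD !rmorphM /= -ipE; ring.
exists (X%:C%C *: u1 + v); split; first exact: subD subM _ _ (subZ subM _ M1) Mv.
  apply: contra_neq v_neq0 => w0.
  have v_eq : v = (- X)%:C%C *: u1.
    by apply/eqP; rewrite rmorphN scaleNr -addr_eq0 addrC w0.
  have MXu := subZ subM (- X)%:C%C M1.
  move: Svv; rewrite v_eq (sesqZl sesqS) // (sesqZr sesqS) // S11 ip_norm2 conjc_real.
  rewrite -!rmorphM => /complexI /eqP.
  by rewrite !mulf_eq0 norm2_eq0 (negPf u1_neq0) orbF orbb => /eqP ->; rewrite scale0r.
by rewrite Sw ipw -rmorphM; congr (_%:C%C); lra.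
Qed.

Lemma form_numrange_convex S z1 z2 (l : R) : sesquilinear_on M S ->
  form_numrange S z1 -> form_numrange S z2 -> 0 <= l <= 1 ->
  form_numrange S (l%:C%C * z1 + (1 - l)%:C%C * z2).
Proof.
move=> sesqS [u1 [M1 u1_neq0 S11]] [u2 [M2 u2_neq0 S22]] l01.
have [<-|z12] := eqVneq z1 z2.
  by exists u1; split=> //; rewrite S11 -mulrDl -rmorphD /= addrC subrK mul1r.
pose S' u v := (S u v - z2 * ip u v) / (z1 - z2).
have z12' : z1 - z2 != 0 by rewrite subr_eq0.
have sesqS' : sesquilinear_on M S'.
  case: sesqS => SDl SZl SDr SZr; split=> *; rewrite /S'.
  - by rewrite SDl // ipDl; field.
  - by rewrite SZl // ipZl; field.
  - by rewrite SDr // ipDr; field.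
  - by rewrite SZr // ipZr; field.
have [||w [Mw w_neq0 Sw]] := form_numrange01 sesqS' M1 M2 u1_neq0 u2_neq0 _ _ l01.
- by rewrite /S' S11; field.
- by rewrite /S' S22 subrr mul0r.
exists w; split=> //.
have -> : S w w = S' w w * (z1 - z2) + z2 * ip w w by rewrite /S'; field.
by rewrite Sw rmorphB rmorph1; ring.
Qed.

Lemma form_numrange_halfplane S z : sesquilinear_on M S -> ~ form_numrange S z ->
  exists2 om : R[i], om != 0 &
    forall u, M u -> Re (om * (S u u - z * ip u u)) <= 0.
Proof.
move=> sesqS zNW.
pose K k := form_numrange S (k + z).
have convK : convexC K.
  move=> k1 k2 l K1 K2 l01; rewrite /K.
  have -> : l%:C%C * k1 + (1 - l)%:C%C * k2 + z =
            l%:C%C * (k1 + z) + (1 - l)%:C%C * (k2 + z) by rewrite rmorphB rmorph1; ring.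
  exact: form_numrange_convex.
have [|om om_neq0 hom] := convexC_halfplane convK; first by rewrite /K add0r.
exists om => // u Mu.
have [->|u_neq0] := eqVneq u 0.
  have := sesqZl sesqS 0 (sub0 subM) (sub0 subM); rewrite scale0r mul0r => ->.
  by rewrite ip0l mulr0 subrr mulr0.
have nu := norm2_gt0 HS u_neq0.
have Ku : K (S u u / ip u u - z).
  by exists u; split=> //; rewrite subrK divfK // ip_self_eq0.
have -> : S u u - z * ip u u = (S u u / ip u u - z) * (norm2 HS u)%:C%C.
  by rewrite -ip_norm2; field; rewrite ip_self_eq0.
rewrite mulrA [_ * (norm2 HS u)%:C%C]mulrC Re_scalec.
by apply: mulr_ge0_le0; [exact: ltW | exact: hom].
Qed.

End FormNumRange.

Definition quad_bounded (R : realType) (H : lmodType R[i]) (HS : Hilbert H)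
  (M : H -> Prop) (f : H -> R) :=
  exists c : R, forall u, M u -> f u <= c * norm2 HS u.

Section QuadraticBounds.
Variables (R : realType) (H : lmodType R[i]) (HS : Hilbert H).
Local Notation ip := (ip HS).
Local Notation norm2 := (norm2 HS).
Variable M : H -> Prop.
Implicit Types (f g : H -> R) (L : H -> H) (al be : H -> R[i]).

Lemma quad_bounded_le f g (k : R) : 0 <= k -> (forall u, M u -> g u <= k * f u) ->
  quad_bounded HS M f -> quad_bounded HS M g.
Proof.
move=> k0 gf [c hc]; exists (k * c) => u Mu.
by rewrite -mulrA; apply: le_trans (gf u Mu) (ler_wpM2l k0 (hc u Mu)).
Qed.

Lemma eq_quad_bounded f g : (forall u, M u -> g u = f u) ->
  quad_bounded HS M f -> quad_bounded HS M g.
Proof. by move=> gf; apply: (quad_bounded_le ler01) => u Mu; rewrite mul1r gf. Qed.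

Lemma quad_boundedD f g : quad_bounded HS M f -> quad_bounded HS M g ->
  quad_bounded HS M (fun u => f u + g u).
Proof.
move=> [c hc] [d hd]; exists (c + d) => u Mu.
by rewrite mulrDl lerD ?hc ?hd.
Qed.

Lemma quad_bounded_norm2 : quad_bounded HS M norm2.
Proof. by exists 1 => u _; rewrite mul1r. Qed.

Lemma quad_bounded_comp (M' : H -> Prop) f L :
  quad_bounded HS M' f -> (forall u, M u -> M' (L u)) ->
  quad_bounded HS M (fun u => norm2 (L u)) -> quad_bounded HS M (fun u => f (L u)).
Proof.
move=> [c hc] ML; apply: (quad_bounded_le (normr_ge0 c)) => u Mu.
exact: le_trans (hc _ (ML u Mu)) (ler_wpM2r (norm2_ge0 _ _) (ler_norm c)).
Qed.

Lemma quad_bounded_norm2D L1 L2 :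
  quad_bounded HS M (fun u => norm2 (L1 u)) -> quad_bounded HS M (fun u => norm2 (L2 u)) ->
  quad_bounded HS M (fun u => norm2 (L1 u + L2 u)).
Proof.
move=> h1 h2; apply: (quad_bounded_le (k := 2)) (quad_boundedD h1 h2) => // u _.
by rewrite mulrDr norm2D_le.
Qed.

Lemma quad_bounded_norm2B L1 L2 :
  quad_bounded HS M (fun u => norm2 (L1 u)) -> quad_bounded HS M (fun u => norm2 (L2 u)) ->
  quad_bounded HS M (fun u => norm2 (L1 u - L2 u)).
Proof.
move=> h1 h2; apply: quad_bounded_norm2D h1 _.
by apply: eq_quad_bounded h2 => u _; rewrite norm2N.
Qed.

Lemma quad_bounded_norm2Z al p : quad_bounded HS M (fun u => cnorm2 (al u)) ->
  quad_bounded HS M (fun u => norm2 (al u *: p)).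
Proof.
apply: (quad_bounded_le (norm2_ge0 HS p)) => u _.
by rewrite norm2Z mulrC.
Qed.

Lemma quad_bounded_cnorm2M (c : R[i]) al : quad_bounded HS M (fun u => cnorm2 (al u)) ->
  quad_bounded HS M (fun u => cnorm2 (c * al u)).
Proof. by apply: (quad_bounded_le (cnorm2_ge0 c)) => u _; rewrite cnorm2M. Qed.

Lemma quad_bounded_cnorm2J al : quad_bounded HS M (fun u => cnorm2 (al u)) ->
  quad_bounded HS M (fun u => cnorm2 (al u)^*).
Proof. by apply: eq_quad_bounded => u _; rewrite cnorm2_conjc. Qed.

Lemma quad_bounded_ipl L v : quad_bounded HS M (fun u => norm2 (L u)) ->
  quad_bounded HS M (fun u => cnorm2 (ip (L u) v)).
Proof.
apply: (quad_bounded_le (norm2_ge0 HS v)) => u _.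
by rewrite mulrC cauchy_schwarz.
Qed.

Lemma quad_bounded_ipr L v : quad_bounded HS M (fun u => norm2 (L u)) ->
  quad_bounded HS M (fun u => cnorm2 (ip v (L u))).
Proof.
move/(quad_bounded_ipl v)/quad_bounded_cnorm2J.
by apply: eq_quad_bounded => u _; rewrite -(ip_conj HS).
Qed.

Lemma quad_bounded_Re_mul al be : quad_bounded HS M (fun u => cnorm2 (al u)) ->
  quad_bounded HS M (fun u => cnorm2 (be u)) -> quad_bounded HS M (fun u => Re (al u * be u)).
Proof.
move=> hal hbe; apply: (quad_bounded_le (k := 2^-1)) (quad_boundedD hal hbe).
  by rewrite invr_ge0.
by move=> u _; have := Re_mul_le (al u) (be u); lra.
Qed.

Lemma quad_bounded_biorth_residual v1 v2 p1 p2 :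
  quad_bounded HS M (fun u => norm2 (biorth_residual HS v1 v2 p1 p2 u)).
Proof.
have qip v := quad_bounded_ipl (L := id) v quad_bounded_norm2.
exact: quad_bounded_norm2B (quad_bounded_norm2B quad_bounded_norm2
  (quad_bounded_norm2Z p2 (qip v1))) (quad_bounded_norm2Z p1 (qip v2)).
Qed.

End QuadraticBounds.

Section Operator.
Variables (R : realType) (H : lmodType R[i]) (HS : Hilbert H) (T : LinOp H).
Local Notation ip := (ip HS).
Local Notation norm2 := (norm2 HS).
Local Notation dom := (dom T).
Local Notation op := (op T).
Local Notation perp := (perp_dom HS T).
Implicit Types (M : H -> Prop) (u v w n p : H) (a b : R[i]).

Lemma op0 : op 0 = 0.
Proof.
have := @op_lin _ _ T 1 0 0 (dom0 T) (dom0 T); rewrite scale1r addr0 scale1r => h.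
by apply: (@addrI _ (op 0)); rewrite addr0 -h.
Qed.

Lemma opD u v : dom u -> dom v -> op (u + v) = op u + op v.
Proof. by move=> du dv; have := @op_lin _ _ T 1 u v du dv; rewrite !scale1r. Qed.

Lemma opZ a u : dom u -> op (a *: u) = a *: op u.
Proof. by move=> du; have := @op_lin _ _ T a u 0 du (dom0 T); rewrite !addr0 op0 addr0. Qed.

Lemma dom_subspace : subspace dom.
Proof. by split; [exact: dom0 | exact: domD | exact: domZ]. Qed.

Lemma perp_subspace v : subspace (perp v).
Proof.
split; first by split; [exact: dom0 | rewrite ip0l].
- by move=> u w [du hu] [dw hw]; split; [exact: domD | rewrite ipDl hu hw addr0].
- by move=> a u [du hu]; split; [exact: domZ | rewrite ipZl hu mulr0].
Qed.

Definition qform u := ip (op u) u.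

Lemma op_sesquilinear M : (forall u, M u -> dom u) ->
  sesquilinear_on M (fun u v => ip (op u) v).
Proof.
move=> Mdom; split=> [u v w Mu Mv _|a u w Mu _|*|*]; rewrite ?ipDr ?ipZr //.
- by rewrite (opD (Mdom _ Mu) (Mdom _ Mv)) ipDl.
- by rewrite (opZ a (Mdom _ Mu)) ipZl.
Qed.

Lemma numrange_of_form_numrange M z : subspace M -> (forall u, M u -> dom u) ->
  form_numrange HS M (fun u v => ip (op u) v) z -> numrange HS T M z.
Proof.
move=> subM Mdom [u [Mu u_neq0 qu]]; have [a a1] := exists_unit_multiple HS u_neq0.
exists (a *: u); split; [exact: subZ | split=> //].
by rewrite (opZ a (Mdom _ Mu)) ipZl ipZr qu -[RHS]mulr1 -a1 ipZl ipZr; ring.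
Qed.

(* W(T|_M) lies in the half-plane { z | Re (om * z) <= c } for some c. *)
Definition numrange_halfplane M om := quad_bounded HS M (fun u => Re (om * qform u)).

Lemma not_full_numrange_halfplane M : subspace M -> (forall u, M u -> dom u) ->
  ~ numrange_full HS T M -> exists2 om, om != 0 & numrange_halfplane M om.
Proof.
move=> subM Mdom /not_all_ex_not [z zNW].
have zNW' : ~ form_numrange HS M (fun u v => ip (op u) v) z.
  by move=> hz; apply: zNW; apply: numrange_of_form_numrange.
have [om om_neq0 hom] := form_numrange_halfplane subM (op_sesquilinear Mdom) zNW'.
exists om => //; exists (Re (om * z)) => u Mu.
have := hom u Mu; rewrite ip_norm2 mulrBr Re_sub mulrA [_ * (norm2 u)%:C%C]mulrC Re_scalec.
by rewrite /qform; lra.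
Qed.

Lemma full_numrange_halfplane_eq0 om : numrange_full HS T dom ->
  numrange_halfplane dom om -> om = 0.
Proof.
move=> full [c hc]; apply/eqP; apply: contraT => om_neq0.
have [u [du [u1 qu]]] := full ((c + 1)%:C%C / om).
have := hc u du; rewrite /qform qu /norm2 u1 mulr1 mulrC divfK //=; lra.
Qed.

Definition split_remainder (om1 om2 k1 k2 : R[i]) p1 p2 n a b :=
  (om1 + om2 - om1 * k1) * a * ip (op p1) n
  + (om1 + om2 - om2 * k2) * b * ip (op p2) n
  + (om1 + om2 - om1 * (k1 * k1^*)) * qform p1 * a * a^*
  + (om1 + om2 - om2 * (k2 * k2^*)) * qform p2 * b * b^*
  + (om1 + om2) * ip (op p1) p2 * a * b^*
  + (om1 + om2) * ip (op p2) p1 * b * a^*.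

(* The constraints on k1, k2 make the terms <T n, p_i> cancel, and <T n, n> cancels
   because the weights add up to om1 + om2. *)
Lemma qform_split (om1 om2 k1 k2 : R[i]) n p1 p2 a b :
  dom n -> dom p1 -> dom p2 -> om1 != 0 -> om2 != 0 ->
  k1^* = (om1 + om2) / om1 -> k2^* = (om1 + om2) / om2 ->
  (om1 + om2) * qform (n + a *: p1 + b *: p2) =
    om1 * qform (n + (k1 * a) *: p1) + om2 * qform (n + (k2 * b) *: p2)
    + split_remainder om1 om2 k1 k2 p1 p2 n a b.
Proof.
move=> dn d1 d2 om1_neq0 om2_neq0 hk1 hk2.
have da := domZ a d1; have db := domZ b d2.
have dka := domZ (k1 * a) d1; have dkb := domZ (k2 * b) d2; have dna := domD dn da.
rewrite /split_remainder /qform !opD // !opZ // !ipDl !ipDr !ipZl !ipZr !rmorphM /= hk1 hk2.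
by field; rewrite om1_neq0 om2_neq0.
Qed.

Lemma quad_bounded_split_remainder M (om1 om2 k1 k2 : R[i]) p1 p2
    (n : H -> H) (a b : H -> R[i]) :
  quad_bounded HS M (fun u => norm2 (n u)) ->
  quad_bounded HS M (fun u => cnorm2 (a u)) -> quad_bounded HS M (fun u => cnorm2 (b u)) ->
  quad_bounded HS M (fun u => Re (split_remainder om1 om2 k1 k2 p1 p2 (n u) (a u) (b u))).
Proof.
move=> qn qa qb.
have ReD x y : quad_bounded HS M (fun u => Re (x u)) ->
    quad_bounded HS M (fun u => Re (y u)) -> quad_bounded HS M (fun u => Re (x u + y u)).
  by move=> qx qy; apply: eq_quad_bounded (quad_boundedD qx qy) => u _; rewrite Re_add.
have term c al be := @quad_bounded_Re_mul _ _ HS M (fun u => c * al u) be.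
have qaJ := quad_bounded_cnorm2J qa; have qbJ := quad_bounded_cnorm2J qb.
apply: (ReD); last exact: term _ _ _ (quad_bounded_cnorm2M _ qb) qaJ.
apply: (ReD); last exact: term _ _ _ (quad_bounded_cnorm2M _ qa) qbJ.
apply: (ReD); last exact: term _ _ _ (quad_bounded_cnorm2M _ qb) qbJ.
apply: (ReD); last exact: term _ _ _ (quad_bounded_cnorm2M _ qa) qaJ.
apply: (ReD); last exact: term _ _ _ (quad_bounded_cnorm2M _ qb) (quad_bounded_ipr _ qn).
exact: term _ _ _ (quad_bounded_cnorm2M _ qa) (quad_bounded_ipr _ qn).
Qed.

Lemma exists_dual_vector v1 v2 : dom v1 -> dom v2 ->
  (forall a b, a *: v1 + b *: v2 = 0 -> a = 0 /\ b = 0) ->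
  exists p, [/\ dom p, ip p v1 = 0 & ip p v2 = 1].
Proof.
move=> d1 d2 indep.
have v1_neq0 : v1 != 0.
  apply/eqP => v10; have [] := indep 1 0; rewrite ?v10 ?scaler0 ?scale0r ?addr0 //.
  by move/eqP; rewrite oner_eq0.
pose p := v2 - (ip v2 v1 / ip v1 v1) *: v1.
have dp : dom p by apply: domD => //; rewrite -scaleNr; apply: domZ.
have p1 : ip p v1 = 0 by rewrite ipBl ipZl divfK ?ip_self_eq0 // subrr.
have p_neq0 : p != 0.
  apply/eqP => p0; have [] := indep (- (ip v2 v1 / ip v1 v1)) 1.
    by rewrite scale1r addrC scaleNr -/p p0.
  by move=> _ /eqP; rewrite oner_eq0.
have p2 : ip p v2 = ip p p.
  by rewrite {3}/p ipBr ipZr p1 mulr0 subr0.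
exists ((ip p p)^-1 *: p); split; first exact: domZ.
- by rewrite ipZl p1 mulr0.
- by rewrite ipZl p2 mulVf ?ip_self_eq0.
Qed.

Lemma numrange_halfplane_perp_add v1 v2 p1 p2 (om1 om2 : R[i]) :
  dom p1 -> dom p2 -> ip p1 v1 = 0 -> ip p1 v2 = 1 -> ip p2 v2 = 0 -> ip p2 v1 = 1 ->
  om1 != 0 -> om2 != 0 ->
  numrange_halfplane (perp v1) om1 -> numrange_halfplane (perp v2) om2 ->
  numrange_halfplane dom (om1 + om2).
Proof.
move=> d1 d2 p1v1 p1v2 p2v2 p2v1 om1_neq0 om2_neq0 hp1 hp2.
pose k1 := ((om1 + om2) / om1)^*; pose k2 := ((om1 + om2) / om2)^*.
pose a u := ip u v2; pose b u := ip u v1; pose n := biorth_residual HS v1 v2 p1 p2.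
pose m1 u := n u + (k1 * a u) *: p1; pose m2 u := n u + (k2 * b u) *: p2.
have dn u : dom u -> dom (n u).
  by move=> du; rewrite /n /biorth_residual -!scaleNr; do !apply: domD => //; apply: domZ.
have m1_perp u : dom u -> perp v1 (m1 u).
  move=> du; split; first by apply: domD; [exact: dn | exact: domZ].
  by rewrite ipDl ipZl biorth_residual_orthl // p1v1 mulr0 addr0.
have m2_perp u : dom u -> perp v2 (m2 u).
  move=> du; split; first by apply: domD; [exact: dn | exact: domZ].
  by rewrite ipDl ipZl biorth_residual_orthr // p2v2 mulr0 addr0.
have qa : quad_bounded HS dom (fun u => cnorm2 (a u)).
  exact: quad_bounded_ipl (quad_bounded_norm2 _ _).
have qb : quad_bounded HS dom (fun u => cnorm2 (b u)).
  exact: quad_bounded_ipl (quad_bounded_norm2 _ _).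
have qn := quad_bounded_biorth_residual HS dom v1 v2 p1 p2.
have qm1 : quad_bounded HS dom (fun u => norm2 (m1 u)) :=
  quad_bounded_norm2D qn (quad_bounded_norm2Z p1 (quad_bounded_cnorm2M k1 qa)).
have qm2 : quad_bounded HS dom (fun u => norm2 (m2 u)) :=
  quad_bounded_norm2D qn (quad_bounded_norm2Z p2 (quad_bounded_cnorm2M k2 qb)).
apply: (eq_quad_bounded (f := fun u => Re (om1 * qform (m1 u)) + Re (om2 * qform (m2 u))
  + Re (split_remainder om1 om2 k1 k2 p1 p2 (n u) (a u) (b u)))).
  move=> u du; rewrite {1}(biorth_residualE HS v1 v2 p1 p2 u) -/(n u).
  rewrite (@qform_split om1 om2 k1 k2 _ _ _ (a u) (b u) (dn u du) d1 d2 om1_neq0 om2_neq0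
    (conjCK _) (conjCK _)).
  by rewrite !Re_add.
apply: quad_boundedD (quad_bounded_split_remainder _ _ _ _ _ _ qn qa qb).
exact: quad_boundedD (quad_bounded_comp hp1 m1_perp qm1) (quad_bounded_comp hp2 m2_perp qm2).
Qed.

Lemma numrange_halfplane_perp_opposite x y (t1 t2 om1 om2 : R[i]) :
  numrange_full HS T dom -> dom x -> dom y ->
  (forall a b, a *: x + b *: y = 0 -> a = 0 /\ b = 0) ->
  t1 != t2 -> om1 != 0 -> om2 != 0 ->
  numrange_halfplane (perp (y + t1 *: x)) om1 ->
  numrange_halfplane (perp (y + t2 *: x)) om2 -> om1 + om2 = 0.
Proof.
move=> full dx dy indep t12 om1_neq0 om2_neq0 hp1 hp2.
have dv t : dom (y + t *: x) by apply: domD => //; apply: domZ.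
have indep12 a b : a *: (y + t1 *: x) + b *: (y + t2 *: x) = 0 -> a = 0 /\ b = 0.
  rewrite !scalerDr !scalerA addrACA -!scalerDl addrC => /indep [abt ab].
  have b_eq : b = - a by apply/eqP; rewrite -addr_eq0 addrC ab.
  move: abt; rewrite b_eq mulNr -mulrBr => /eqP.
  by rewrite mulf_eq0 subr_eq0 (negPf t12) orbF => /eqP a0; rewrite a0 oppr0.
have indep21 a b : a *: (y + t2 *: x) + b *: (y + t1 *: x) = 0 -> a = 0 /\ b = 0.
  by rewrite addrC => /indep12 [].
have [p1 [d1 p1v1 p1v2]] := exists_dual_vector (dv t1) (dv t2) indep12.
have [p2 [d2 p2v2 p2v1]] := exists_dual_vector (dv t2) (dv t1) indep21.
apply: full_numrange_halfplane_eq0 full _.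
exact: numrange_halfplane_perp_add d1 d2 p1v1 p1v2 p2v2 p2v1 om1_neq0 om2_neq0 hp1 hp2.
Qed.

Lemma numrange_full_perp_shift x y : numrange_full HS T dom -> dom x -> dom y ->
  (forall a b, a *: x + b *: y = 0 -> a = 0 /\ b = 0) ->
  exists s : seq R[i], (size s <= 2)%N /\
    forall t, t \notin s -> numrange_full HS T (perp (y + t *: x)).
Proof.
move=> full dx dy indep.
have sub_perp t : subspace (perp (y + t *: x)) := perp_subspace _.
have perp_dom t u : perp (y + t *: x) u -> dom u by case.
have [|s [s2 hs]] := @exceptions_le2 _ (fun t => ~ numrange_full HS T (perp (y + t *: x))).
  move=> t1 t2 t3 nf1 nf2 nf3 t12 t13 t23.
  have [om1 om1_neq0 hp1] := not_full_numrange_halfplane (sub_perp t1) (@perp_dom t1) nf1.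
  have [om2 om2_neq0 hp2] := not_full_numrange_halfplane (sub_perp t2) (@perp_dom t2) nf2.
  have [om3 om3_neq0 hp3] := not_full_numrange_halfplane (sub_perp t3) (@perp_dom t3) nf3.
  have opp := numrange_halfplane_perp_opposite full dx dy indep.
  have e12 := opp _ _ _ _ t12 om1_neq0 om2_neq0 hp1 hp2.
  have e13 := opp _ _ _ _ t13 om1_neq0 om3_neq0 hp1 hp3.
  have e23 := opp _ _ _ _ t23 om2_neq0 om3_neq0 hp2 hp3.
  have : om1 *+ 2 = (om1 + om2) + (om1 + om3) - (om2 + om3) by rewrite mulr2n; ring.
  by rewrite e12 e13 e23 addr0 subrr => /eqP; rewrite mulrn_eq0 (negPf om1_neq0).
by exists s; split=> // t /hs /NNPP.
Qed.

Lemma qform_perturb_le x y (r : R) a : dom x -> dom y ->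
  ip x x = 1 -> ip y y = 1 -> ip x y = 0 -> 0 <= r <= 1 ->
  ip (a *: (y + r%:C%C *: x)) (a *: (y + r%:C%C *: x)) = 1 ->
  normc (qform (a *: (y + r%:C%C *: x)) - qform y) <=
    r * (normc (ip (op x) y + ip (op y) x) + normc (qform x - qform y)).
Proof.
move=> dx dy x1 y1 xy /andP[r_ge0 r_le1] a1.
set v := y + r%:C%C *: x; set Ky := ip (op x) y + ip (op y) x; set Dq := qform x - qform y.
have dv : dom v by apply: domD => //; apply: domZ.
have v_def : v = r%:C%C *: x + y by rewrite addrC.
have v2 : ip v v = 1 + (r ^+ 2)%:C%C.
  rewrite v_def ip_expand conjc_real x1 y1 xy (ip_conj HS x y) xy conjC0.
  by rewrite rmorphXn /=; ring.
have ca2 : (cnorm2 a)%:C%C * (1 + (r ^+ 2)%:C%C) = 1.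
  by move: a1; rewrite ipZl ipZr mulrA mulc_conjc v2.
have a2 : cnorm2 a * (1 + r ^+ 2) = 1.
  by have := congr1 (@complex.Re R) ca2; rewrite Re_scalec Re_add.
have a2_le1 : cnorm2 a <= 1.
  by rewrite -a2 ler_peMr ?cnorm2_ge0 // lerDl sqr_ge0.
have qv : qform v = qform y + r%:C%C * Ky + (r ^+ 2)%:C%C * qform x.
  rewrite /qform v_def (form_expand _ dom_subspace (op_sesquilinear (fun _ => id)) dx dy).
  by rewrite conjc_real rmorphXn /= /Ky; ring.
have -> : qform (a *: v) - qform y = (cnorm2 a)%:C%C * (r%:C%C * Ky + (r ^+ 2)%:C%C * Dq).
  rewrite /qform opZ // ipZl ipZr mulrA mulc_conjc -/(qform v) qv /Dq.
  apply/eqP; rewrite -subr_eq0; apply/eqP.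
  transitivity (((cnorm2 a)%:C%C * (1 + (r ^+ 2)%:C%C) - 1) * qform y).
    by rewrite /qform; ring.
  by rewrite ca2 subrr mul0r.
rewrite normcM normc_real ger0_norm ?cnorm2_ge0 //.
apply: le_trans (ler_piMl _ a2_le1) _; first exact: normc_ge0.
apply: le_trans (le_normcD _ _) _; rewrite !normcM !normc_real !ger0_norm ?exprn_ge0 //.
rewrite mulrDr lerD2l ler_wpM2r ?normc_ge0 // expr2 ler_piMr //.
Qed.

Lemma numrange_full_perp_near y : numrange_full HS T dom -> dom y -> ip y y = 1 ->
  (exists z, perp y z /\ z <> 0) -> forall eps : R, 0 < eps ->
  exists w, dom w /\ ip w w = 1 /\ numrange_full HS T (perp w) /\
    normc (qform w - qform y) < eps.
Proof.
move=> full dy y1 [z [[dz zy] /eqP z_neq0]] eps eps_gt0.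
have [c x1] := exists_unit_multiple HS z_neq0; set x := c *: z in x1.
have dx : dom x by exact: domZ.
have xy : ip x y = 0 by rewrite ipZl zy mulr0.
clearbody x.
have indep a b : a *: x + b *: y = 0 -> a = 0 /\ b = 0.
  move=> abxy; have b0 : b = 0.
    by have := congr1 (ip^~ y) abxy; rewrite ipDl !ipZl xy y1 ip0l mulr0 mulr1 add0r.
  split=> //; move: abxy; rewrite b0 scale0r addr0 => /eqP.
  rewrite scaler_eq0 => /orP[/eqP // | /eqP x0].
  by move: x1; rewrite x0 ip0l => /eqP; rewrite eq_sym oner_eq0.
have [s [_ hs]] := numrange_full_perp_shift full dx dy indep.
set K := normc (ip (op x) y + ip (op y) x) + normc (qform x - qform y).
have K_ge0 : 0 <= K by rewrite addr_ge0 ?normc_ge0.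
have K1_gt0 : 0 < K + 1 by lra.
have de_gt0 : 0 < Num.min 1 (eps / (K + 1)) by rewrite lt_min ltr01 divr_gt0.
have [r [/andP[r_gt0]]] := exists_pos_real_notin s de_gt0.
rewrite le_min ler_pdivlMr // => /andP[r_le1 r_le] r_notin.
have rK : r * K < eps by nra.
set v := y + r%:C%C *: x.
have v_neq0 : v != 0.
  apply/eqP => v0; have [|r0 _] := indep r%:C%C 1; first by rewrite scale1r addrC.
  by move: r_gt0; have /= -> := congr1 (@complex.Re R) r0; rewrite ltxx.
have [a a1] := exists_unit_multiple HS v_neq0.
exists (a *: v); split; first by apply: domZ; apply: domD => //; exact: domZ.
split=> //; split.
  move=> t; have [u [[du uv] ut]] := hs _ r_notin t.
  by exists u; split=> //; split=> //; rewrite ipZr uv mulr0.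
apply: le_lt_trans rK.
by apply: (qform_perturb_le dx dy x1 y1 xy _ a1); rewrite (ltW r_gt0) r_le1.
Qed.

End Operator.

Theorem lemma2p7 (R : realType) (H : lmodType R[i]) (HS : Hilbert H) (T : LinOp H) :
  numrange_full HS T (dom T) ->
  (* (i) *)
  (forall x y : H, dom T x -> dom T y -> ip HS x x = 1 -> ip HS y y = 1 ->
     (forall a b : R[i], a *: x + b *: y = 0 -> a = 0 /\ b = 0) ->
     exists s : seq R[i], (size s <= 3)%N /\
       forall t : R[i], t \notin s -> numrange_full HS T (perp_dom HS T (y + t *: x)))
  /\
  (* (ii) *)
  (forall y : H, dom T y -> ip HS y y = 1 ->
     (exists z : H, perp_dom HS T y z /\ z <> 0) ->
     forall eps : R, 0 < eps ->
       exists w : H, dom T w /\ ip HS w w = 1 /\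
         numrange_full HS T (perp_dom HS T w) /\
         ComplexField.Normc.normc (ip HS (op T w) w - ip HS (op T y) y) < eps).
Proof.
move=> full; split; last by move=> y; exact: numrange_full_perp_near.
move=> x y dx dy _ _ indep.
have [s [s_le2 hs]] := numrange_full_perp_shift full dx dy indep.
by exists s; split; first exact: leq_trans s_le2 _.
Qed.
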